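(* Let $R$ be a commutative Noetherian ring with unity such that $\Gamma_E(R)$ has at least three vertices. If a vertex $[y]$ of $\Gamma_E(R)$ is adjacent to a leaf, then $\operatorname{ann}(y)$ is a maximal element of $\mathfrak F=\{\operatorname{ann}(z)\mid 0\neq z\in R\}$ and is an associated prime of $R$.
   Context: For $x,y\in R$ write $x\sim y$ iff $\operatorname{ann}(x)=\operatorname{ann}(y)$; $[x]$ denotes the equivalence class of $x$. Let $Z^*(R)$ be the set of nonzero zero divisors of $R$. The graph $\Gamma_E(R)$ is the simple graph whose vertices are the classes $[x]$ with $x\in Z^*(R)$, two distinct vertices $[x],[y]$ being adjacent iff $xy=0$. A leaf is a vertex of degree $1$. An associated prime of $R$ is a prime ideal of the form $\operatorname{ann}(y)$, $y\in R$. *)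

From mathcomp Require Import all_boot all_algebra.
Set Implicit Arguments. Unset Strict Implicit. Unset Printing Implicit Defensive.
Import GRing.Theory.
Local Open Scope ring_scope.

Section Defs.
Variable R : comNzRingType.

Definition is_ideal (I : R -> Prop) : Prop :=
  I 0 /\ (forall a b, I a -> I b -> I (a + b)) /\ (forall r a, I a -> I (r * a)).

Definition noetherian : Prop :=
  forall I : nat -> R -> Prop,
    (forall n, is_ideal (I n)) ->
    (forall n x, I n x -> I n.+1 x) ->
    exists N, forall n, (N <= n)%N -> forall x, I n x <-> I N x.

Definition ann (x : R) : R -> Prop := fun r => r * x = 0.

Definition same_ann (x y : R) : Prop := forall r, ann x r <-> ann y r.

Definition nz_zero_divisor (x : R) : Prop := x <> 0 /\ exists y, y <> 0 /\ x * y = 0.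

(* Adjacency of the (distinct) vertices [x], [y] of Gamma_E(R). *)
Definition adjE (x y : R) : Prop :=
  nz_zero_divisor x /\ nz_zero_divisor y /\ ~ same_ann x y /\ x * y = 0.

Definition atleast3_vertices : Prop :=
  exists x1 x2 x3, nz_zero_divisor x1 /\ nz_zero_divisor x2 /\ nz_zero_divisor x3 /\
    ~ same_ann x1 x2 /\ ~ same_ann x1 x3 /\ ~ same_ann x2 x3.

Definition leafE (x : R) : Prop :=
  nz_zero_divisor x /\
  exists w, adjE x w /\ forall w', adjE x w' -> same_ann w' w.

Definition subpred (P Q : R -> Prop) : Prop := forall r, P r -> Q r.

Definition maximal_in_annF (P : R -> Prop) : Prop :=
  (exists z, z <> 0 /\ forall r, P r <-> ann z r) /\
  forall z, z <> 0 -> subpred P (ann z) -> subpred (ann z) P.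

Definition prime_ideal (P : R -> Prop) : Prop :=
  is_ideal P /\ ~ P 1 /\ forall a b, P (a * b) -> P a \/ P b.

Definition associated_prime (P : R -> Prop) : Prop :=
  prime_ideal P /\ exists w, forall r, P r <-> ann w r.

End Defs.

(* Let [x] be a leaf whose only neighbour is [y].  Every nonzero w with
   wx = 0 is a zero divisor, hence is equivalent to x or to y.  If
   ann(y) were contained in ann(x), then x^2 = 0 and every nonzero zero
   divisor v would kill some nonzero w with wx = 0 (take w = u or w = ux,
   where vu = 0), so v would lie in ann(x) and be equivalent to x or y:
   the graph would have only two vertices.  Hence for z <> 0 with
   ann(y) <= ann(z), the element z (which kills x) must be equivalent to y,
   i.e. ann(y) is maximal among annihilators of nonzero elements, and a
   maximal annihilator is prime. *)
From Pilot Require Import Defs.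
From mathcomp Require Import all_boot all_algebra.
From Stdlib Require Import Classical.
Set Implicit Arguments. Unset Strict Implicit. Unset Printing Implicit Defensive.
Local Open Scope ring_scope.
Import GRing.Theory.

Section Annihilators.
Variable R : comNzRingType.

Lemma same_ann_sym (a b : R) : same_ann a b -> same_ann b a.
Proof. by move=> eab r; rewrite (eab r). Qed.

Lemma same_ann_trans (a b c : R) : same_ann a b -> same_ann b c -> same_ann a c.
Proof. by move=> eab ebc r; rewrite (eab r) (ebc r). Qed.

Lemma ann_ideal (y : R) : is_ideal (ann y).
Proof.
split; first by rewrite /ann mul0r.
split; first by move=> a b; rewrite /ann mulrDl => -> ->; rewrite addr0.
by move=> r a; rewrite /ann -mulrA => ->; rewrite mulr0.
Qed.

Lemma nz_zero_divisorP (w x : R) : w <> 0 -> x <> 0 -> w * x = 0 ->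
  nz_zero_divisor w.
Proof. by move=> nzw nzx wx; split=> //; exists x. Qed.

Lemma two_classes_not_atleast3 (a b : R) :
  (forall v, nz_zero_divisor v -> same_ann v a \/ same_ann v b) ->
  ~ atleast3_vertices R.
Proof.
move=> classes [x1 [x2 [x3 [n1 [n2 [n3 [d12 [d13 d23]]]]]]]].
have same : forall u v c : R, same_ann u c -> same_ann v c -> same_ann u v.
  by move=> u v c euc evc; apply: same_ann_trans euc (same_ann_sym evc).
by case: (classes x1 n1) (classes x2 n2) (classes x3 n3) => [e1|e1] [e2|e2] [e3|e3];
  solve [exact: d12 (same _ _ _ e1 e2) | exact: d13 (same _ _ _ e1 e3)
         | exact: d23 (same _ _ _ e2 e3)].
Qed.

Lemma maximal_ann_prime (y : R) : y <> 0 ->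
  (forall z : R, z <> 0 ->
     Defs.subpred (ann y) (ann z) -> Defs.subpred (ann z) (ann y)) ->
  prime_ideal (ann y).
Proof.
move=> nzy maxy; split; first exact: ann_ideal.
split; first by rewrite /ann mul1r.
move=> a b; rewrite /ann => aby.
have [ay|nzay] := eqVneq (a * y) 0; [by left | right].
have sub_ay : Defs.subpred (ann y) (ann (a * y)).
  by move=> r; rewrite /ann => ry; rewrite mulrA mulrAC ry mul0r.
by apply: (maxy _ (elimN eqP nzay) sub_ay); rewrite /ann mulrA [b * a]mulrC.
Qed.

End Annihilators.

Section LeafNeighbour.
Variables (R : comNzRingType) (x y : R).
Hypotheses (leaf_x : leafE x) (adj_xy : adjE x y).

Lemma leaf_nonzero : x <> 0.
Proof. by case: leaf_x => [[]]. Qed.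

Lemma neighbour_nonzero : y <> 0.
Proof. by case: adj_xy => _ [[]]. Qed.

Lemma leaf_in_ann_neighbour : ann y x.
Proof. by case: adj_xy => _ [_ [_ xy]]. Qed.

Lemma ann_leaf_classes (w : R) : w <> 0 -> w * x = 0 ->
  same_ann w x \/ same_ann w y.
Proof.
move=> nzw wx; case: leaf_x => nzx [w0 [_ unique_w0]].
have [exw|nexw] := classic (same_ann x w); first by left; apply: same_ann_sym.
right; have adj_xw : adjE x w.
  split=> //; split; first exact: nz_zero_divisorP leaf_nonzero wx.
  by split=> //; rewrite mulrC.
exact: same_ann_trans (unique_w0 w adj_xw) (same_ann_sym (unique_w0 y adj_xy)).
Qed.

Lemma ann_neighbour_not_sub_leaf :
  atleast3_vertices R -> ~ Defs.subpred (ann y) (ann x).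
Proof.
move=> three sub; apply: (@two_classes_not_atleast3 _ x y) three.
have xx : x * x = 0 by apply: sub; exact: leaf_in_ann_neighbour.
move=> v [nzv [u [nzu vu]]]; apply: ann_leaf_classes => //.
have [w [nzw wx vw]] : exists w, [/\ w <> 0, w * x = 0 & v * w = 0].
  have [ux|nzux] := eqVneq (u * x) 0; first by exists u.
  exists (u * x); split; first exact/eqP.
    by rewrite -mulrA xx mulr0.
  by rewrite mulrA vu mul0r.
have [ewx|ewy] := ann_leaf_classes nzw wx; first exact/(ewx v).
by apply: sub; apply/(ewy v).
Qed.

Lemma ann_neighbour_maximal : atleast3_vertices R ->
  forall z, z <> 0 -> Defs.subpred (ann y) (ann z) -> Defs.subpred (ann z) (ann y).
Proof.
move=> three z nzz sub.
have zx : z * x = 0 by rewrite mulrC; apply: sub; exact: leaf_in_ann_neighbour.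
have [ezx|ezy] := ann_leaf_classes nzz zx; last by move=> r /(ezy r).
by case: (ann_neighbour_not_sub_leaf three) => r /sub /(ezx r).
Qed.

End LeafNeighbour.

Theorem corollary3p3 (R : comNzRingType) :
  noetherian R -> atleast3_vertices R ->
  forall x y : R, leafE x -> adjE x y ->
    maximal_in_annF (ann y) /\ associated_prime (ann y).
Proof.
move=> _ three x y leaf_x adj_xy.
have nzy := neighbour_nonzero adj_xy.
have maxy := ann_neighbour_maximal leaf_x adj_xy three.
split; first by split=> //; exists y.
by split; [exact: maximal_ann_prime | exists y].
Qed.
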